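(* Let $\mathcal{S}=\{s_1,\dots,s_M\}$ and let $\{S(\tau)\}_{\tau\ge 0}$ be independent $\mathcal{S}$-valued random variables with $\Pr\{S(\tau)=s_i\}=\pi_i(\tau)$. Fix a time $t$, a prediction window parameter $w\ge 0$, an integer $d\ge w+1$ with $t+w+1-d\ge 0$, and predicted distributions $\hat{\boldsymbol\pi}(t+k)$, $k=0,\dots,w$, satisfying $\|\hat{\boldsymbol\pi}(t+k)-\boldsymbol\pi(t+k)\|_{tv}\le e(k)$; put $e_w=\frac{1}{w+1}\sum_{k=0}^w e(k)$. Define $$\hat\pi^d_i=\frac1d\Big(\sum_{\tau=t+w+1-d}^{t-1}\mathbf 1_{[S(\tau)=s_i]}+\sum_{k=0}^{w}\hat\pi_i(t+k)\Big),$$ and let $\mathcal W_m$ be a set of $n_m\ge d$ time slots, all strictly smaller than $t+w+1-d$, with $\hat\pi^m_i=\frac1{n_m}\sum_{\tau\in\mathcal W_m}\mathbf 1_{[S(\tau)=s_i]}$. Suppose $\boldsymbol\pi(\tau)=\boldsymbol\pi_1$ for all $\tau\in\{t+w+1-d,\dots,t+w\}$ and $\boldsymbol\pi(\tau)=\boldsymbol\pi_2\neq\boldsymbol\pi_1$ for all $\tau\in\mathcal W_m$, and that $\max_i|\pi_{1i}-\pi_{2i}|>4(w+1)e_w/d$. Let $\delta\in(0,1)$, and let $\epsilon_d$ satisfy $0<\epsilon_d<\epsilon_0:=\tfrac12\max_i|\pi_{1i}-\pi_{2i}|-(w+1)e_w/d$ and $d>\ln\frac4\delta\cdot\frac{1}{2\epsilon_d^2}+w+1$.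 Then with probability at least $1-\delta$, $$\|\hat{\boldsymbol\pi}^d-\hat{\boldsymbol\pi}^m\|_{tv}>\epsilon_d,$$ i.e. the change test in step (i) of the ADE procedure fires at time $t$, so that ADE resets both windows to start at $t+w+1$ (the window $\mathcal W_m$ becomes empty).
   Context: For distributions $\boldsymbol\pi_1,\boldsymbol\pi_2$ on $\mathcal S$, $\|\boldsymbol\pi_1-\boldsymbol\pi_2\|_{tv}:=\sum_i|\pi_{1i}-\pi_{2i}|$. The ADE (average distribution estimate) procedure maintains a ''detection window'' consisting of the $d$ most recent samples, namely the observed states in slots $t+w+1-d,\dots,t-1$ together with the $w+1$ predicted distributions for slots $t,\dots,t+w$ (its estimate is $\hat{\boldsymbol\pi}^d$ above), and an earlier ''memory window'' $\mathcal W_m$ of observed states (estimate $\hat{\boldsymbol\pi}^m$). Its step (i) reads: if $|\mathcal W_m|\ge d$ and $\|\hat{\boldsymbol\pi}^d-\hat{\boldsymbol\pi}^m\|_{tv}>\epsilon_d$, declare a distribution change and restart both windows at slot $t+w+1$. *)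

From Stdlib Require Import Reals.
From HB Require Import structures.
From mathcomp Require Import all_boot.
Set Implicit Arguments. Unset Strict Implicit. Unset Printing Implicit Defensive.
Local Open Scope R_scope.

(* total-variation distance as in the paper: sum_i |p_i - q_i| *)
Definition tv (M : nat) (p q : 'I_M -> R) : R :=
  \big[Rplus/0]_(i < M) Rabs (p i - q i).

Definition maxdiff (M : nat) (p q : 'I_M -> R) : R :=
  \big[Rmax/0]_(i < M) Rabs (p i - q i).

Definition is_distr (M : nat) (p : 'I_M -> R) : Prop :=
  (forall i, (0 <= p i)) /\ \big[Rplus/0]_(i < M) p i = 1.

Definition ind (b : bool) : R := if b then 1 else 0.

(* Joint law of the independent variables S(0),...,S(t-1) (product measure):
   probability of an event E about the outcome f (f tau = index of S(tau)). *)
Definition joint_prob (t M : nat) (pi : nat -> 'I_M -> R)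
    (E : {ffun 'I_t -> 'I_M} -> bool) : R :=
  \big[Rplus/0]_(f : {ffun 'I_t -> 'I_M})
     ((\big[Rmult/1]_(tau < t) pi (tau : nat) (f tau)) * ind (E f)).

Definition pihat_d (t M w d : nat) (hatpi : nat -> 'I_M -> R)
    (f : {ffun 'I_t -> 'I_M}) (i : 'I_M) : R :=
  (/ INR d * (\big[Rplus/0]_(tau < t | (t + w + 1 - d <= tau)%N) ind (f tau == i)
             + \big[Rplus/0]_(k < w.+1) hatpi (t + k)%N i)).

Definition pihat_m (t M : nat) (Wm : {set 'I_t})
    (f : {ffun 'I_t -> 'I_M}) (i : 'I_M) : R :=
  (/ INR #|Wm| * \big[Rplus/0]_(tau in Wm) ind (f tau == i)).

Definition ew (w : nat) (e : nat -> R) : R :=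
  (/ INR (w + 1) * \big[Rplus/0]_(k < w.+1) e k).

(* Fix a coordinate i0 at which |pi1 i - pi2 i| is maximal.  The difference of
   the two estimates at i0 is an affine function of the independent indicators
   1[S(tau) = s_i0], with weight 1/d on the observed slots of the detection
   window and -1/|W_m| on the memory window; its mean is within (w+1)e_w/d (the
   prediction error) of pi1 i0 - pi2 i0.  Both estimates are distributions, so
   if the test does not fire this coordinate is at most eps_d/2 in absolute
   value and deviates from its mean by s >= 3 eps_d/2.  The squared weights sum
   to at most 2/d, so Hoeffding's inequality (a Chernoff bound combined with
   Hoeffding's lemma for each indicator) bounds the probability of such a
   deviation by exp(-d s^2) < delta. *)

From Stdlib Require Import Reals Lra Psatz.
From Coquelicot Require Import Coquelicot.
(* After Reals: its Rtopology module also exports a function named [ind]. *)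
From HB Require Import structures.
From mathcomp Require Import all_boot zify.
Set Implicit Arguments. Unset Strict Implicit. Unset Printing Implicit Defensive.
Local Open Scope R_scope.

Lemma exp_le_compat x y : x <= y -> exp x <= exp y.
Proof. by case=> [/exp_increasing/Rlt_le|->]; last exact: Rle_refl. Qed.

Lemma MVT_from_0 (f f' : R -> R) (x : R) :
  (forall y, is_derive f y (f' y)) -> exists c, 0 <= c * x /\ f x - f 0 = f' c * x.
Proof.
move=> df; have [c [hc ->]] := @MVT_gen f 0 x f' (fun y _ => df y)
  (fun y _ => derivable_continuous_pt _ _ (ex_derive_Reals_0 _ _ (ex_intro _ _ (df y)))).
exists c; split; last by rewrite Rminus_0_r.
move: hc; rewrite /Rmin /Rmax; case: Rle_dec => _ [? ?]; nra.
Qed.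

Lemma convex_flat_ge0 (h h' h'' : R -> R) :
  (forall y, is_derive h y (h' y)) -> (forall y, is_derive h' y (h'' y)) ->
  (forall y, 0 <= h'' y) -> h 0 = 0 -> h' 0 = 0 -> forall x, 0 <= h x.
Proof.
move=> dh dh' h''_ge0 h0 h'0 x.
have [c [cx hx]] := MVT_from_0 x dh.
have [c' [c'c hc]] := MVT_from_0 c dh'.
have := h''_ge0 c'; nra.
Qed.

Lemma hoeffding_lemma_bernoulli (p x : R) : 0 <= p <= 1 ->
  (1 - p) * exp (- (x * p)) + p * exp (x * (1 - p)) <= exp (x ^ 2 / 8).
Proof.
move=> hp.
pose B y := 1 - p + p * exp y.
have B_gt0 y : 0 < B y by rewrite /B; have := exp_pos y; nra.
pose q y := p * exp y / B y.
have q_bound y : 0 <= q y <= 1.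
  have := B_gt0 y; have := exp_pos y; rewrite /q /B => ? ?.
  split; first by apply: Rdiv_le_0_compat; nra.
  apply: (Rmult_le_reg_r (B y)) => //.
  by rewrite /Rdiv Rmult_assoc Rinv_l; rewrite /B; lra.
have log_mgf_le y : ln (B y) - p * y <= y ^ 2 / 8.
  suff : 0 <= y ^ 2 / 8 - ln (B y) + p * y by lra.
  move: y; apply: (@convex_flat_ge0 (fun y => y ^ 2 / 8 - ln (B y) + p * y)
    (fun y => y / 4 - q y + p) (fun y => / 4 - q y * (1 - q y))).
  - move=> z; have := B_gt0 z; rewrite /q /B => ?; auto_derive; [lra | field; lra].
  - move=> z; have := B_gt0 z; rewrite /q /B => ?; auto_derive; [lra | field; lra].
  - by move=> z; have := pow2_ge_0 (q z - / 2); lra.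
  - rewrite /B exp_0 Rmult_1_r (_ : 1 - p + p = 1) ?ln_1; [rewrite /=; field | ring].
  - by rewrite /q /B exp_0 Rmult_1_r (_ : 1 - p + p = 1); [field | ring].
have -> : (1 - p) * exp (- (x * p)) + p * exp (x * (1 - p)) = exp (ln (B x) - p * x).
  rewrite /Rminus exp_plus exp_ln // /B.
  have -> : x * (1 + - p) = x + - (p * x) by ring.
  rewrite exp_plus; have -> : - (x * p) = - (p * x) by ring.
  ring.
exact/exp_le_compat/log_mgf_le.
Qed.

Lemma Rplus_associative : associative Rplus. Proof. by move=> *; rewrite Rplus_assoc. Qed.
Lemma Rmult_associative : associative Rmult. Proof. by move=> *; rewrite Rmult_assoc. Qed.
HB.instance Definition _ :=
  Monoid.isComLaw.Build R 0 Rplus Rplus_associative Rplus_comm Rplus_0_l.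
HB.instance Definition _ :=
  Monoid.isComLaw.Build R 1 Rmult Rmult_associative Rmult_comm Rmult_1_l.
HB.instance Definition _ := Monoid.isMulLaw.Build R 0 Rmult Rmult_0_l Rmult_0_r.
HB.instance Definition _ :=
  Monoid.isAddLaw.Build R Rmult Rplus Rmult_plus_distr_r Rmult_plus_distr_l.

Section RealBigops.
Variables (I : Type) (r : seq I) (P : pred I).

Lemma Rle_sum (F G : I -> R) :
  (forall i, P i -> F i <= G i) ->
  \big[Rplus/0]_(i <- r | P i) F i <= \big[Rplus/0]_(i <- r | P i) G i.
Proof. by move=> FG; apply: (big_ind2 Rle) => // *; lra. Qed.

Lemma Rsum_ge0 (F : I -> R) :
  (forall i, P i -> 0 <= F i) -> 0 <= \big[Rplus/0]_(i <- r | P i) F i.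
Proof. by move=> F_ge0; apply: (big_ind (Rle 0)) => // *; lra. Qed.

Lemma Rle_prod (F G : I -> R) :
  (forall i, P i -> 0 <= F i <= G i) ->
  \big[Rmult/1]_(i <- r | P i) F i <= \big[Rmult/1]_(i <- r | P i) G i.
Proof.
move=> FG; suff [] : 0 <= \big[Rmult/1]_(i <- r | P i) F i
                      <= \big[Rmult/1]_(i <- r | P i) G i by [].
apply: (big_ind2 (fun x y => 0 <= x <= y)) => //; first lra.
move=> x1 x2 y1 y2 [? ?] [? ?]; split; first exact: Rmult_le_pos.
exact: Rmult_le_compat.
Qed.

Lemma Rprod_ge0 (F : I -> R) :
  (forall i, P i -> 0 <= F i) -> 0 <= \big[Rmult/1]_(i <- r | P i) F i.
Proof.
by move=> F_ge0; apply: (big_ind (Rle 0)) => // *; [lra | exact: Rmult_le_pos].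
Qed.

Lemma Rabs_sum (F : I -> R) :
  Rabs (\big[Rplus/0]_(i <- r | P i) F i) <= \big[Rplus/0]_(i <- r | P i) Rabs (F i).
Proof.
apply: (big_ind2 (fun x y => Rabs x <= y)); first by rewrite Rabs_R0; lra.
- by move=> x1 x2 y1 y2 h1 h2; apply: Rle_trans (Rabs_triang _ _) _; lra.
- by move=> *; lra.
Qed.

Lemma Rsum_opp (F : I -> R) :
  \big[Rplus/0]_(i <- r | P i) - F i = - \big[Rplus/0]_(i <- r | P i) F i.
Proof. by symmetry; apply: (big_morph Ropp) => [x y|]; ring. Qed.

Lemma exp_sum (F : I -> R) :
  exp (\big[Rplus/0]_(i <- r | P i) F i) = \big[Rmult/1]_(i <- r | P i) exp (F i).
Proof. exact: (big_morph exp exp_plus exp_0). Qed.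

End RealBigops.

Lemma iter_Rplus n c : iter n (Rplus c) 0 = INR n * c.
Proof. by elim: n => [|n IH]; rewrite ?iterS ?IH ?S_INR /=; ring. Qed.

Lemma Rsum_const (T : finType) (A : {pred T}) c :
  \big[Rplus/0]_(i in A) c = INR #|A| * c.
Proof. by rewrite big_const iter_Rplus. Qed.

Lemma Rsum_const_ord n c : \big[Rplus/0]_(i < n) c = INR n * c.
Proof. by rewrite big_const_ord iter_Rplus. Qed.

Lemma Rsum_const_ord_ge n k c :
  \big[Rplus/0]_(i < n | (k <= i)%N) c = INR (n - k) * c.
Proof.
elim: n => [|n IH]; first by rewrite big_ord0 /=; ring.
rewrite big_mkcond big_ord_recr /= -big_mkcond /= IH.
case: (leqP k n) => kn.
- by rewrite (_ : n.+1 - k = (n - k).+1)%N; [rewrite S_INR; ring | lia].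
- by rewrite (_ : n.+1 - k = 0)%N; [rewrite (_ : n - k = 0)%N; [simpl; ring | lia] | lia].
Qed.

Lemma ind_negb b : ind (~~ b) = 1 - ind b.
Proof. by case: b; rewrite /ind /=; ring. Qed.

Lemma Rsum_ind_eq M (j : 'I_M) : \big[Rplus/0]_(i < M) ind (j == i) = 1.
Proof.
rewrite (bigD1 j) //= eqxx big1 => [|i /negbTE]; first by rewrite /ind; ring.
by rewrite eq_sym => ->.
Qed.

Lemma distr_le1 M (p : 'I_M -> R) i : is_distr p -> 0 <= p i <= 1.
Proof.
case=> p_ge0 p_sum; split => //; rewrite -p_sum (bigD1 i) //=.
rewrite -{1}[p i]Rplus_0_r; apply: Rplus_le_compat_l; exact: Rsum_ge0.
Qed.

Lemma distr_dim_gt0 M (p : 'I_M -> R) : is_distr p -> (0 < M)%N.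
Proof. by case: M p => // p [_]; rewrite big_ord0 => /esym/R1_neq_R0. Qed.

Lemma mgf_centered_indicator M (p : 'I_M -> R) i x : is_distr p ->
  \big[Rplus/0]_(j < M) (p j * exp (x * (p i - ind (j == i)))) <= exp (x ^ 2 / 8).
Proof.
move=> p_distr; have := proj2 p_distr; rewrite (bigD1 i) //= => p_sum.
rewrite (bigD1 i) //= (eq_bigr (fun j => exp (x * p i) * p j)); last first.
  by move=> j /negbTE ji; rewrite /ind ji Rminus_0_r; ring.
rewrite -big_distrr /= /ind eqxx.
have := hoeffding_lemma_bernoulli (- x) (distr_le1 i p_distr).
have -> : \big[Rplus/0]_(j < M | j != i) p j = 1 - p i.
  by apply: (Rplus_eq_reg_l (p i)); rewrite p_sum; ring.
have -> : x * (x * 1) / 8 = (- x) ^ 2 / 8 by rewrite /=; field.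
have -> : x * p i = - (- x * p i) by ring.
have -> : x * (p i - 1) = - x * (1 - p i) by ring.
lra.
Qed.

Lemma tv_ge_2Rabs M (x y : 'I_M -> R) i :
  \big[Rplus/0]_j x j = \big[Rplus/0]_j y j -> 2 * Rabs (x i - y i) <= tv x y.
Proof.
move=> same_mass; rewrite /tv (bigD1 i) //=.
have : \big[Rplus/0]_j (x j - y j) = 0.
  by rewrite /Rminus big_split Rsum_opp /= same_mass Rplus_opp_r.
rewrite (bigD1 i) //= => sum0.
have -> : 2 * Rabs (x i - y i) = Rabs (x i - y i) + Rabs (x i - y i) by ring.
apply: Rplus_le_compat_l.
rewrite -Rabs_Ropp (_ : - (x i - y i) = \big[Rplus/0]_(j < M | j != i) (x j - y j)).
  exact: Rabs_sum.
by apply: (Rplus_eq_reg_l (x i - y i)); rewrite sum0 Rplus_opp_r.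
Qed.

Lemma maxdiff_attained M (p q : 'I_M -> R) : (0 < M)%N ->
  exists i, maxdiff p q <= Rabs (p i - q i).
Proof.
move=> M_gt0.
suff [le0 | //] : maxdiff p q <= 0 \/ exists i, maxdiff p q <= Rabs (p i - q i).
  exists (Ordinal M_gt0); have := Rabs_pos (p (Ordinal M_gt0) - q (Ordinal M_gt0)); lra.
rewrite /maxdiff; elim/big_rec: _ => [|i x _ IH]; first by left; exact: Rle_refl.
have [le_x | lt_x] := Rle_dec (Rabs (p i - q i)) x.
  by rewrite Rmax_right.
by right; exists i; rewrite Rmax_left; [exact: Rle_refl | lra].
Qed.

Lemma tv_ge0 M (x y : 'I_M -> R) : 0 <= tv x y.
Proof. by apply: Rsum_ge0 => i _; exact: Rabs_pos. Qed.

Lemma Rabs_le_tv M (x y : 'I_M -> R) i : Rabs (x i - y i) <= tv x y.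
Proof.
rewrite /tv (bigD1 i) //= -{1}[Rabs _]Rplus_0_r; apply: Rplus_le_compat_l.
by apply: Rsum_ge0 => j _; exact: Rabs_pos.
Qed.

Lemma sign_witness x : exists2 sg, sg = 1 \/ sg = -1 & sg * x = Rabs x.
Proof.
case: (Rle_dec 0 x) => [x_ge0 | /Rnot_le_lt x_lt0].
  by exists 1; [left | rewrite Rmult_1_l Rabs_right //; lra].
by exists (-1); [right | rewrite Rabs_left //; ring].
Qed.

Lemma sign_mul_le_Rabs sg y : sg = 1 \/ sg = -1 -> sg * y <= Rabs y.
Proof.
case=> ->; first by rewrite Rmult_1_l; exact: Rle_abs.
by have := Rle_abs (- y); rewrite Rabs_Ropp => ?; lra.
Qed.

Section ProductMeasure.
Variables (t M : nat) (pi : nat -> 'I_M -> R).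
Hypothesis pi_distr : forall tau : 'I_t, is_distr (pi tau).

Lemma joint_mass_ge0 (f : {ffun 'I_t -> 'I_M}) :
  0 <= \big[Rmult/1]_(tau < t) pi tau (f tau).
Proof. by apply: Rprod_ge0 => tau _; case: (pi_distr tau). Qed.

Lemma joint_prob_compl (E : {ffun 'I_t -> 'I_M} -> bool) q :
  joint_prob pi (fun f => ~~ E f) <= q -> joint_prob pi E >= 1 - q.
Proof.
suff -> : joint_prob pi E = 1 - joint_prob pi (fun f => ~~ E f) by move=> ?; lra.
have total : \big[Rplus/0]_(f : {ffun 'I_t -> 'I_M})
               \big[Rmult/1]_(tau < t) pi tau (f tau) = 1.
  rewrite -(bigA_distr_bigA (fun (tau : 'I_t) j => pi tau j)) /=.
  by rewrite big1 // => tau _; case: (pi_distr tau).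
rewrite -total /joint_prob /Rminus -Rsum_opp -big_split /=; apply: eq_bigr => f _.
rewrite ind_negb; ring.
Qed.

Lemma joint_prob_chernoff (b : 'I_t -> 'I_M -> R) (mu s : R)
    (E : {ffun 'I_t -> 'I_M} -> bool) :
  0 <= mu -> (forall f, E f -> s <= \big[Rplus/0]_(tau < t) b tau (f tau)) ->
  joint_prob pi E <= exp (- (mu * s)) *
    \big[Rmult/1]_(tau < t) \big[Rplus/0]_(j < M) (pi tau j * exp (mu * b tau j)).
Proof.
move=> mu_ge0 E_dev.
rewrite (bigA_distr_bigA (fun (tau : 'I_t) j => pi tau j * exp (mu * b tau j))).
rewrite big_distrr /=; apply: Rle_sum => f _.
rewrite big_split /= -exp_sum -big_distrr /= [X in _ <= X]Rmult_comm Rmult_assoc.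
apply: Rmult_le_compat_l; first exact: joint_mass_ge0.
rewrite -exp_plus /ind; case: (boolP (E f)) => [/E_dev dev | _] /=.
  rewrite -exp_0; apply: exp_le_compat.
  apply: (Rplus_le_reg_r (mu * s)).
  rewrite Rplus_0_l Rplus_assoc Rplus_opp_l Rplus_0_r.
  exact: Rmult_le_compat_l.
exact: Rlt_le (exp_pos _).
Qed.

Lemma joint_prob_hoeffding (a : 'I_t -> R) (i : 'I_M) (s A : R)
    (E : {ffun 'I_t -> 'I_M} -> bool) :
  0 <= s -> 0 < A -> \big[Rplus/0]_(tau < t) (a tau * a tau) <= A ->
  (forall f, E f ->
     s <= \big[Rplus/0]_(tau < t) (a tau * (pi tau i - ind (f tau == i)))) ->
  joint_prob pi E <= exp (- (2 * s ^ 2 / A)).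
Proof.
(* [mu] minimises [- mu * s + mu ^ 2 * A / 8]. *)
move=> s_ge0 A_gt0 a2_le E_dev; set mu := 4 * s / A.
have mu_ge0 : 0 <= mu by apply: Rdiv_le_0_compat; lra.
apply: Rle_trans (joint_prob_chernoff mu_ge0 E_dev) _.
apply: Rle_trans (_ : exp (- (mu * s)) *
    \big[Rmult/1]_(tau < t) exp ((mu * a tau) ^ 2 / 8) <= _).
  apply: Rmult_le_compat_l; first exact: Rlt_le (exp_pos _).
  apply: Rle_prod => tau _; split.
    apply: Rsum_ge0 => j _; apply: Rmult_le_pos; first by case: (pi_distr tau).
    exact: Rlt_le (exp_pos _).
  apply: (Rle_trans _ _ _ _ (mgf_centered_indicator i (mu * a tau) (pi_distr tau))).
  by right; apply: eq_bigr => j _; rewrite Rmult_assoc.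
rewrite -exp_sum -exp_plus; apply: exp_le_compat.
have -> : \big[Rplus/0]_(tau < t) ((mu * a tau) ^ 2 / 8) =
          mu ^ 2 / 8 * \big[Rplus/0]_(tau < t) (a tau * a tau).
  by rewrite big_distrr; apply: eq_bigr => tau _ /=; field.
have : mu ^ 2 / 8 * \big[Rplus/0]_(tau < t) (a tau * a tau) <= mu ^ 2 / 8 * A.
  by apply: Rmult_le_compat_l => //; apply: Rdiv_le_0_compat; [nra | lra].
rewrite /mu => h; apply: Rle_trans (Rplus_le_compat_l _ _ _ h) _.
right; rewrite /=; field; lra.
Qed.

End ProductMeasure.

Lemma exp_opp_lt (a delta c : R) :
  1 <= a -> 0 < delta -> ln (a / delta) < c -> exp (- c) < delta.
Proof.
move=> a_ge1 delta_gt0 lt_c.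
have a_gt0 : 0 < a by lra.
apply: (Rlt_le_trans _ (delta / a)).
  rewrite -(exp_ln (delta / a)); last exact: Rdiv_lt_0_compat.
  apply: exp_increasing; rewrite ln_div // in lt_c; rewrite ln_div //; lra.
rewrite -[X in _ <= X]Rmult_1_r; apply: Rmult_le_compat_l; first lra.
by rewrite -Rinv_1; apply: Rinv_le_contravar; [lra | exact: a_ge1].
Qed.

(* No union bound is needed, since the sign of the deviation is fixed by its
   mean: [ln (1 / delta)] would do in place of [ln (4 / delta)]. *)
Lemma hoeffding_tail_lt (delta eps s n : R) :
  0 < delta -> 0 < eps -> 0 < n -> 2 * eps ^ 2 <= s ^ 2 ->
  ln (4 / delta) * / (2 * eps ^ 2) < n -> exp (- (2 * s ^ 2 / (2 / n))) < delta.
Proof.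
move=> delta_gt0 eps_gt0 n_gt0 eps_s n_large.
have eps2_gt0 : 0 < 2 * eps ^ 2 by nra.
rewrite (_ : 2 * s ^ 2 / (2 / n) = s ^ 2 * n); last by field; apply: Rgt_not_eq.
apply: (exp_opp_lt (a := 4)); [lra | lra |].
apply: (Rlt_le_trans _ (n * (2 * eps ^ 2))); last by rewrite Rmult_comm; nra.
rewrite {1}(_ : ln (4 / delta) = ln (4 / delta) * / (2 * eps ^ 2) * (2 * eps ^ 2)).
  exact: Rmult_lt_compat_r.
by field; apply: Rgt_not_eq.
Qed.

Section AverageDistributionEstimate.
Variables (M t w d : nat) (pi hatpi : nat -> 'I_M -> R) (e : nat -> R).
Variables (Wm : {set 'I_t}) (pi1 pi2 : 'I_M -> R).

Local Notation lo := (t + w + 1 - d)%N.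

Hypotheses (w_lt_d : (w + 1 <= d)%N) (d_le : (d <= t + w + 1)%N).
Hypotheses (Wm_before : forall tau : 'I_t, tau \in Wm -> (tau < lo)%N)
           (d_le_Wm : (d <= #|Wm|)%N).
Hypothesis hatpi_distr : forall k, (k <= w)%N -> is_distr (hatpi (t + k)%N).
Hypothesis hatpi_err :
  forall k, (k <= w)%N -> tv (hatpi (t + k)%N) (pi (t + k)%N) <= e k.
Hypothesis pi_detection : forall tau, (lo <= tau <= t + w)%N -> pi tau = pi1.
Hypothesis pi_memory : forall tau : 'I_t, tau \in Wm -> pi tau = pi2.

Definition ade_weight (tau : 'I_t) : R :=
  if (lo <= tau)%N then / INR d else if tau \in Wm then - / INR #|Wm| else 0.

Definition predicted_part (i : 'I_M) : R :=
  / INR d * \big[Rplus/0]_(k < w.+1) hatpi (t + k)%N i.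

Definition expected_gap (i : 'I_M) : R :=
  \big[Rplus/0]_(tau < t) (ade_weight tau * pi tau i) + predicted_part i.

Lemma INR_d_gt0 : 0 < INR d.
Proof. exact/lt_0_INR/ltP/(leq_trans (leq_addl w 1) w_lt_d). Qed.

Lemma INR_Wm_ge_d : INR d <= INR #|Wm|.
Proof. exact/le_INR/leP. Qed.

Lemma INR_Wm_gt0 : 0 < INR #|Wm|.
Proof. exact: Rlt_le_trans INR_d_gt0 INR_Wm_ge_d. Qed.

Lemma INR_observed_slots : INR (t - lo) = INR d - INR (w + 1).
Proof. by rewrite (_ : t - lo = d - (w + 1))%N ?minus_INR //; [apply/leP | lia]. Qed.

Lemma sum_ade_weight (g : 'I_t -> R) :
  \big[Rplus/0]_(tau < t) (ade_weight tau * g tau) =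
  / INR d * \big[Rplus/0]_(tau < t | (lo <= tau)%N) g tau
  - / INR #|Wm| * \big[Rplus/0]_(tau in Wm) g tau.
Proof.
rewrite !big_distrr /Rminus -Rsum_opp.
rewrite [X in _ = X + _]big_mkcond [X in _ = _ + X]big_mkcond /=.
rewrite -big_split /=; apply: eq_bigr => tau _; rewrite /ade_weight.
case: ifP => lo_tau; case: ifP => tau_Wm //=; try ring.
by have := Wm_before tau_Wm; lia.
Qed.


Lemma sum_pihat_d (f : {ffun 'I_t -> 'I_M}) :
  \big[Rplus/0]_i pihat_d w d hatpi f i = 1.
Proof.
rewrite /pihat_d -big_distrr big_split /= [X in _ * (X + _)]exchange_big.
rewrite [X in _ * (_ + X)]exchange_big /=.
rewrite [X in _ * (X + _)](eq_bigr (fun _ => 1)) => [|tau _]; last exact: Rsum_ind_eq.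
rewrite [X in _ * (_ + X)](eq_bigr (fun _ => 1)) => [|k _]; last first.
  by case: (hatpi_distr (ltn_ord k)).
rewrite Rsum_const_ord_ge Rsum_const_ord INR_observed_slots -[w.+1]addn1.
have := INR_d_gt0 => d_gt0; field; lra.
Qed.

Lemma sum_pihat_m (f : {ffun 'I_t -> 'I_M}) : \big[Rplus/0]_i pihat_m Wm f i = 1.
Proof.
rewrite /pihat_m -big_distrr exchange_big /=.
rewrite (eq_bigr (fun _ => 1)) => [|tau _]; last exact: Rsum_ind_eq.
rewrite Rsum_const Rmult_1_r Rinv_l //.
exact: Rgt_not_eq INR_Wm_gt0.
Qed.

Lemma pihat_diff (f : {ffun 'I_t -> 'I_M}) i :
  pihat_d w d hatpi f i - pihat_m Wm f i =
  \big[Rplus/0]_(tau < t) (ade_weight tau * ind (f tau == i)) + predicted_part i.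
Proof. by rewrite sum_ade_weight /pihat_d /pihat_m /predicted_part; ring. Qed.

Lemma expected_gap_sub (f : {ffun 'I_t -> 'I_M}) i :
  expected_gap i - (pihat_d w d hatpi f i - pihat_m Wm f i) =
  \big[Rplus/0]_(tau < t) (ade_weight tau * (pi tau i - ind (f tau == i))).
Proof.
rewrite pihat_diff /expected_gap /Rminus.
rewrite [RHS](eq_bigr (fun tau =>
  ade_weight tau * pi tau i + - (ade_weight tau * ind (f tau == i)))).
  by rewrite big_split Rsum_opp /=; ring.
by move=> tau _; ring.
Qed.

Lemma expected_gap_split i :
  expected_gap i =
  (pi1 i - pi2 i) + (predicted_part i - INR (w + 1) / INR d * pi1 i).
Proof.
rewrite /expected_gap sum_ade_weight.
rewrite [X in / INR d * X](eq_bigr (fun _ => pi1 i)) => [|tau lo_tau]; last first.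
  by rewrite pi_detection //; apply/andP; split => //; have := ltn_ord tau; lia.
rewrite [X in / INR #|Wm| * X](eq_bigr (fun _ => pi2 i)) => [|tau /pi_memory -> //].
rewrite Rsum_const_ord_ge Rsum_const INR_observed_slots.
by field; split; apply: Rgt_not_eq; [exact: INR_d_gt0 | exact: INR_Wm_gt0].
Qed.

Lemma predicted_part_bias i :
  Rabs (predicted_part i - INR (w + 1) / INR d * pi1 i) <=
  INR (w + 1) * ew w e / INR d.
Proof.
have d_neq0 := Rgt_not_eq _ _ INR_d_gt0.
have -> : predicted_part i - INR (w + 1) / INR d * pi1 i =
          / INR d * \big[Rplus/0]_(k < w.+1) (hatpi (t + k)%N i - pi1 i).
  rewrite /predicted_part /Rminus big_split Rsum_opp /= Rsum_const_ord -[w.+1]addn1.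
  by field.
have -> : INR (w + 1) * ew w e / INR d = / INR d * \big[Rplus/0]_(k < w.+1) e k.
  by rewrite /ew; field; split => //; apply/not_0_INR; rewrite addn1.
have inv_d_gt0 := Rinv_0_lt_compat _ INR_d_gt0.
rewrite Rabs_mult Rabs_right; last exact/Rle_ge/Rlt_le.
apply: Rmult_le_compat_l; first exact: Rlt_le.
apply: Rle_trans (Rabs_sum _ _ _) _; apply: Rle_sum => k _.
have k_le_w : (k <= w)%N by rewrite -ltnS.
rewrite -(pi_detection (tau := (t + k)%N)); last by apply/andP; split; lia.
exact: Rle_trans (Rabs_le_tv _ _ _) (hatpi_err k_le_w).
Qed.

Lemma Rabs_expected_gap i :
  Rabs (pi1 i - pi2 i) - INR (w + 1) * ew w e / INR d <= Rabs (expected_gap i).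
Proof.
have := predicted_part_bias i; rewrite expected_gap_split.
set x := pi1 i - pi2 i; set y := predicted_part i - _.
have := Rabs_triang_inv x (- y); rewrite Rabs_Ropp /Rminus Ropp_involutive => ? ?.
lra.
Qed.

Lemma sum_ade_weight_sq :
  \big[Rplus/0]_(tau < t) (ade_weight tau * ade_weight tau) <= 2 / INR d.
Proof.
rewrite sum_ade_weight.
rewrite [X in / INR d * X](eq_bigr (fun _ => / INR d)) => [|tau lo_tau]; last first.
  by rewrite /ade_weight lo_tau.
rewrite [X in / INR #|Wm| * X](eq_bigr (fun _ => - / INR #|Wm|))
  => [|tau tau_Wm]; last first.
  rewrite /ade_weight tau_Wm; case: ifP => // lo_tau.
  by have := Wm_before tau_Wm; lia.
rewrite Rsum_const_ord_ge Rsum_const INR_observed_slots.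
have := INR_Wm_gt0; have := INR_d_gt0; have := pos_INR (w + 1); have := INR_Wm_ge_d.
set D := INR d; set W := INR #|Wm|; set k := INR (w + 1) => W_ge_D k_ge0 D_gt0 W_gt0.
have -> : / D * ((D - k) * / D) - / W * (W * - / W) = (1 - k / D) / D + / W.
  by field; split; apply: Rgt_not_eq.
have -> : 2 / D = 1 / D + / D by field; apply: Rgt_not_eq.
apply: Rplus_le_compat; last exact: Rinv_le_contravar.
apply: Rmult_le_compat_r; first exact/Rlt_le/Rinv_0_lt_compat.
suff : 0 <= k / D by lra.
by apply: Rdiv_le_0_compat.
Qed.

Lemma prediction_bias_ge0 : 0 <= INR (w + 1) * ew w e / INR d.
Proof.
apply: Rdiv_le_0_compat; last exact: INR_d_gt0.
apply: Rmult_le_pos; first exact: pos_INR.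
apply: Rmult_le_pos; first by apply/Rlt_le/Rinv_0_lt_compat/lt_0_INR/ltP; rewrite addn1.
by apply: Rsum_ge0 => k _; exact: Rle_trans (tv_ge0 _ _) (hatpi_err (ltn_ord k)).
Qed.

Lemma missed_change_deviation (f : {ffun 'I_t -> 'I_M}) i (eps sg : R) :
  sg = 1 \/ sg = -1 -> sg * expected_gap i = Rabs (expected_gap i) ->
  tv (pihat_d w d hatpi f) (pihat_m Wm f) <= eps ->
  Rabs (expected_gap i) - eps / 2 <=
  \big[Rplus/0]_(tau < t) (sg * ade_weight tau * (pi tau i - ind (f tau == i))).
Proof.
move=> sg_pm sg_gap tv_le.
have -> : \big[Rplus/0]_(tau < t) (sg * ade_weight tau * (pi tau i - ind (f tau == i))) =
          sg * (expected_gap i - (pihat_d w d hatpi f i - pihat_m Wm f i)).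
  by rewrite expected_gap_sub big_distrr; apply: eq_bigr => tau _ /=; ring.
rewrite Rmult_minus_distr_l sg_gap.
have := tv_ge_2Rabs i (etrans (sum_pihat_d f) (esym (sum_pihat_m f))).
have := sign_mul_le_Rabs (pihat_d w d hatpi f i - pihat_m Wm f i) sg_pm.
lra.
Qed.

End AverageDistributionEstimate.

Theorem lemma1 (M t w d : nat) (pi : nat -> 'I_M -> R)
  (hatpi : nat -> 'I_M -> R) (e : nat -> R)
  (Wm : {set 'I_t}) (pi1 pi2 : 'I_M -> R) (delta eps_d : R) :
  (forall tau, is_distr (pi tau)) ->
  (forall k, (k <= w)%N -> is_distr (hatpi (t + k)%N)) ->
  (w + 1 <= d)%N ->
  (d <= t + w + 1)%N ->
  (forall k, (k <= w)%N -> (tv (hatpi (t + k)%N) (pi (t + k)%N) <= e k)) ->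
  (forall tau : 'I_t, tau \in Wm -> (tau < t + w + 1 - d)%N) ->
  (d <= #|Wm|)%N ->
  (forall tau, (t + w + 1 - d <= tau <= t + w)%N -> pi tau = pi1) ->
  (forall tau : 'I_t, tau \in Wm -> pi (tau : nat) = pi2) ->
  pi1 <> pi2 ->
  (maxdiff pi1 pi2 > 4 * INR (w + 1) * ew w e / INR d) ->
  (0 < delta < 1) ->
  (0 < eps_d < / 2 * maxdiff pi1 pi2 - INR (w + 1) * ew w e / INR d) ->
  (INR d > ln (4 / delta) * / (2 * eps_d ^ 2) + INR (w + 1)) ->
  (joint_prob pi
     (fun f => if Rlt_dec eps_d (tv (pihat_d w d hatpi f) (pihat_m Wm f))
               then true else false) >= 1 - delta).
Proof.
move=> pi_distr hatpi_distr w_lt_d d_le hatpi_err Wm_before d_le_Wm pi_det pi_mem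
  _ _ delta01 eps_bounds d_large.
have [i0 maxdiff_i0] := maxdiff_attained pi1 pi2 (distr_dim_gt0 (pi_distr 0%N)).
have gap := Rabs_expected_gap w_lt_d d_le Wm_before d_le_Wm hatpi_err pi_det pi_mem i0.
have bias_ge0 := prediction_bias_ge0 w_lt_d hatpi_err.
have [sg sg_pm sg_gap] := sign_witness (expected_gap w d pi hatpi Wm i0).
set s := Rabs (expected_gap w d pi hatpi Wm i0) - eps_d / 2.
have s_large : 3 / 2 * eps_d <= s by rewrite /s; lra.
have d_gt0 := INR_d_gt0 w_lt_d.
apply: (joint_prob_compl (fun tau : 'I_t => pi_distr tau)).
apply: Rle_trans (Rlt_le _ _ (hoeffding_tail_lt (eps := eps_d) (s := s) _ _ d_gt0 _ _)).
- apply: (joint_prob_hoeffding (fun tau : 'I_t => pi_distr tau)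
            (a := fun tau => sg * ade_weight w d Wm tau) (i := i0)).
  + lra.
  + by apply: Rdiv_lt_0_compat; lra.
  + rewrite (eq_bigr (fun tau => ade_weight w d Wm tau * ade_weight w d Wm tau)).
      exact: sum_ade_weight_sq.
    by move=> tau _; case: sg_pm => ->; ring.
  + move=> f; case: Rlt_dec => //= /Rnot_lt_le tv_le _.
    exact: (missed_change_deviation w_lt_d d_le Wm_before d_le_Wm hatpi_distr
              sg_pm sg_gap).
- lra.
- lra.
- nra.
- by have := pos_INR (w + 1); lra.
Qed.
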